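(* Let $n\ge 2$, let $X\subset\mathbb{R}^n$ be finite with the Euclidean metric $d$, let $\epsilon>0$ and let $A\subset X$. Let $x\in X\setminus A$ and $r\in\mathbb{N}\cup\{0\}$. Then for any $p\in A\setminus(\partial A)^{\mathfrak{n}+r}_A$ there exists $a\in(\partial A)_A$ such that \[ d(p,x)>d(a,x)+r\frac{\epsilon}{2\sqrt n}. \] In particular, for any $x\in X\setminus A$ and $p\in A$, there exists $a\in(\partial A)^{\mathfrak{n}}_A$ such that $d(a,x)\le d(p,x)$.
   Context: $\mathcal{Q}=\mathcal{Q}(\epsilon)$ is the collection of closed cubes $\{x\in\mathbb{R}^n: j_i\frac{\epsilon}{2\sqrt n}\le x_i\le (j_i+1)\frac{\epsilon}{2\sqrt n},\ i=1,\dots,n\}$, $j\in\mathbb{Z}^n$. For a cube $S\in\mathcal{Q}$ and integer $m\ge0$, $S^m=\{x\in\mathbb{R}^n:\max_i|x_i-s_i|\le m\frac{\epsilon}{2\sqrt n}\text{ for some }s\in S\}$. For $B\subset\mathbb{R}^n$, $\mathcal{I}(B)=\{S\in\mathcal{Q}: S\cap B\ne\emptyset\}$, and for $Y\subset\mathbb{R}^n$, $Y_B=Y\cap B$. A cube $S\in\mathcal{I}(A)$ is an interior cube of $A$ if $S^1\cap X\subset A$ and every cube $T\in\mathcal{Q}$ with $T\subset S^1$ lies in $\mathcal{I}(A)$; otherwise $S\in\mathcal{I}(A)$ is a boundary cube of $A$. The boundary $\partial A$ is the union of all boundary cubes of $A$. For $Y\subset\mathbb{R}^n$ and integer $N\ge0$,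 the $N$-extension is $Y^N=\bigcup_{S\in\mathcal{I}(Y)}S^N$. Thus $(\partial A)^N_A=(\partial A)^N\cap A$ and $(\partial A)_A=\partial A\cap A$. $\mathfrak{n}$ is the smallest integer with $\mathfrak{n}\ge\sqrt n-1$. *)

From HB Require Import structures.
From mathcomp Require Import all_boot all_order all_algebra.
From mathcomp Require Import classical_sets cardinality reals.
Set Implicit Arguments. Unset Strict Implicit. Unset Printing Implicit Defensive.
Import Order.TTheory GRing.Theory Num.Theory.
Local Open Scope ring_scope.
Local Open Scope classical_set_scope.

Section Cubes.
Variables (R : realType) (n : nat).

Definition side (eps : R) : R := eps / (2 * Num.sqrt (n%:R)).

Definition dist (p q : 'rV[R]_n) : R :=
  Num.sqrt (\sum_(i < n) (p ord0 i - q ord0 i) ^+ 2).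

Definition cube (eps : R) (j : 'I_n -> int) : set 'rV[R]_n :=
  [set x | forall i : 'I_n,
     (j i)%:~R * side eps <= x ord0 i <= ((j i)%:~R + 1) * side eps].

Definition cube_ext (eps : R) (m : nat) (j : 'I_n -> int) : set 'rV[R]_n :=
  [set x | exists s, cube eps j s /\
     forall i : 'I_n, `|x ord0 i - s ord0 i| <= m%:R * side eps].

Definition meets (eps : R) (B : set 'rV[R]_n) : set ('I_n -> int) :=
  [set j | exists y, cube eps j y /\ B y].

Definition interior_cube (eps : R) (X A : set 'rV[R]_n) (j : 'I_n -> int) : Prop :=
  meets eps A j /\
  (cube_ext eps 1 j `&` X `<=` A) /\
  (forall k, cube eps k `<=` cube_ext eps 1 j -> meets eps A k).

Definition boundary_cube (eps : R) (X A : set 'rV[R]_n) (j : 'I_n -> int) : Prop :=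
  meets eps A j /\ ~ interior_cube eps X A j.

Definition boundary (eps : R) (X A : set 'rV[R]_n) : set 'rV[R]_n :=
  [set y | exists j, boundary_cube eps X A j /\ cube eps j y].

Definition extension (eps : R) (Y : set 'rV[R]_n) (N : nat) : set 'rV[R]_n :=
  [set y | exists j, meets eps Y j /\ cube_ext eps N j y].

End Cubes.

(* frak n : smallest integer >= sqrt n - 1 (nonnegative for n >= 1) *)
Definition nfrak (R : realType) (n : nat) : nat :=
  `| Num.ceil (Num.sqrt (n%:R : R) - 1) |%N.

From Pilot Require Import Defs.
From HB Require Import structures.
From mathcomp Require Import all_boot all_order all_algebra.
From mathcomp Require Import boolp classical_sets cardinality reals.
From mathcomp Require Import ring lra zify.
Set Implicit Arguments. Unset Strict Implicit. Unset Printing Implicit Defensive.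
Import Order.TTheory GRing.Theory Num.Theory.
Local Open Scope ring_scope.
Local Open Scope classical_set_scope.

(* Walk from p to x along the segment [p, x] in steps moving each coordinate by
   at most one side length, so that consecutive points lie in neighbouring
   cubes.  A cube neighbouring an interior cube meets A; the cube of p meets A
   and the cube of x is not interior (x is not in A), so some point q of the
   walk lies in a boundary cube.  A point a of A in that cube is within
   sqrt n * side <= (nfrak + 1) * side of q, whereas p, being outside the
   (nfrak + r)-extension of the boundary, is more than (nfrak + r + 1) * side
   away from q in some coordinate.  As d(p, x) = d(p, q) + d(q, x), the triangle
   inequality for d(a, x) gives the first claim; the second follows from the
   first with r = 0 unless p already lies in the nfrak-extension. *)

Section Euclidean.
Variables (R : realType) (n : nat).
Implicit Types (a b : 'I_n -> R) (p q x : 'rV[R]_n).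

Lemma sumsq_ge0 a : 0 <= \sum_i a i ^+ 2.
Proof. by apply: sumr_ge0 => i _; apply: sqr_ge0. Qed.

Lemma sqrt_sumsq_eq0 a : Num.sqrt (\sum_i a i ^+ 2) = 0 -> forall i, a i = 0.
Proof.
move=> /eqP; rewrite sqrtr_eq0 => le0 i.
have sum0 : \sum_i a i ^+ 2 = 0 by apply/le_anti; rewrite le0 sumsq_ge0.
by apply/eqP; rewrite -sqrf_eq0; apply/eqP/(psumr_eq0P _ sum0) => // k _; apply: sqr_ge0.
Qed.

Lemma cauchy_schwarz a b :
  \sum_i a i * b i <= Num.sqrt (\sum_i a i ^+ 2) * Num.sqrt (\sum_i b i ^+ 2).
Proof.
set u := Num.sqrt _; set v := Num.sqrt _; set C := \sum_i _.
have [u2 v2] : u ^+ 2 = \sum_i a i ^+ 2 /\ v ^+ 2 = \sum_i b i ^+ 2.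
  by rewrite !sqr_sqrtr ?sumsq_ge0.
have uvC : u * v * C <= u * v * (u * v).
  have amgm i : 2 * (u * v) * (a i * b i) <= v ^+ 2 * a i ^+ 2 + u ^+ 2 * b i ^+ 2.
    by have := sqr_ge0 (v * a i - u * b i); nra.
  have : \sum_i 2 * (u * v) * (a i * b i) <=
      \sum_i (v ^+ 2 * a i ^+ 2 + u ^+ 2 * b i ^+ 2) by apply: ler_sum => i _.
  by rewrite -mulr_sumr big_split -!mulr_sumr /= -u2 -v2 -/C; nra.
have [uv0|] := eqVneq (u * v) 0; last first.
  by move=> uvn0; rewrite -(ler_pM2l (x := u * v)) // lt0r uvn0 mulr_ge0 ?sqrtr_ge0.
have [/eqP u0|/eqP v0] : u == 0 \/ v == 0 by apply/orP; rewrite -mulf_eq0 uv0.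
  by rewrite /C big1 ?uv0 // => i _; rewrite (sqrt_sumsq_eq0 u0) mul0r.
by rewrite /C big1 ?uv0 // => i _; rewrite (sqrt_sumsq_eq0 v0) mulr0.
Qed.

Lemma minkowski a b :
  Num.sqrt (\sum_i (a i + b i) ^+ 2) <=
  Num.sqrt (\sum_i a i ^+ 2) + Num.sqrt (\sum_i b i ^+ 2).
Proof.
have rhs0 : 0 <= Num.sqrt (\sum_i a i ^+ 2) + Num.sqrt (\sum_i b i ^+ 2).
  by rewrite addr_ge0 ?sqrtr_ge0.
rewrite -(ger0_norm rhs0) -sqrtr_sqr; apply: ler_wsqrtr.
have expand i : (a i + b i) ^+ 2 = a i ^+ 2 + b i ^+ 2 + 2 * (a i * b i).
  by ring.
rewrite (eq_bigr _ (fun i _ => expand i)) !big_split /= -mulr_sumr.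
by rewrite sqrrD !sqr_sqrtr ?sumsq_ge0 //; have := cauchy_schwarz a b; lra.
Qed.

Lemma dist_triangle p q x : dist p x <= dist p q + dist q x.
Proof.
rewrite /dist (eq_bigr (fun i => ((p ord0 i - q ord0 i) + (q ord0 i - x ord0 i)) ^+ 2)).
  exact: minkowski.
by move=> i _; rewrite addrA subrK.
Qed.

Lemma dist_segment p x (t : R) : 0 <= t <= 1 ->
  dist p x = dist p (p + t *: (x - p)) + dist (p + t *: (x - p)) x.
Proof.
case/andP=> t0 t1; rewrite /dist.
have -> : \sum_(i < n) (p ord0 i - (p + t *: (x - p)) ord0 i) ^+ 2 =
    t ^+ 2 * \sum_(i < n) (p ord0 i - x ord0 i) ^+ 2.
  by rewrite mulr_sumr; apply: eq_bigr => i _; rewrite !mxE; ring.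
have -> : \sum_(i < n) ((p + t *: (x - p)) ord0 i - x ord0 i) ^+ 2 =
    (1 - t) ^+ 2 * \sum_(i < n) (p ord0 i - x ord0 i) ^+ 2.
  by rewrite mulr_sumr; apply: eq_bigr => i _; rewrite !mxE; ring.
rewrite (sqrtrM _ (sqr_ge0 t)) (sqrtrM _ (sqr_ge0 (1 - t))) !sqrtr_sqr.
by rewrite !ger0_norm ?subr_ge0 //; ring.
Qed.

Lemma dist_coord_le p q i : `|p ord0 i - q ord0 i| <= dist p q.
Proof.
rewrite /dist -sqrtr_sqr; apply: ler_wsqrtr.
by rewrite (bigD1 i) //= lerDl; apply: sumr_ge0 => k _; apply: sqr_ge0.
Qed.

Lemma dist_le_coord_bound p q (c : R) : 0 <= c ->
  (forall i, `|p ord0 i - q ord0 i| <= c) -> dist p q <= Num.sqrt n%:R * c.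
Proof.
move=> c0 pq_le; rewrite /dist -(ger0_norm c0) -sqrtr_sqr -sqrtrM ?ler0n //.
apply: ler_wsqrtr; rewrite -[n in n%:R](card_ord n) mulr_natl -sumr_const.
by apply: ler_sum => i _; rewrite -real_normK ?num_real // ler_sqr ?nnegrE ?normr_ge0.
Qed.

Lemma segment_walk p x (s : R) : 0 < s ->
  exists N (y : nat -> 'rV[R]_n),
    [/\ y 0%N = p, y N = x,
        forall k i, `|y k ord0 i - y k.+1 ord0 i| <= s &
        forall k, (k <= N)%N -> dist p x = dist p (y k) + dist (y k) x].
Proof.
move=> s0; pose N := (Num.truncn (dist p x / s)).+1.
have N0 : 0 < N%:R :> R by rewrite ltr0n.
have dist_le : dist p x <= N%:R * s by rewrite -ler_pdivrMr // ltW ?truncnS_gt.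
exists N, (fun k => p + (k%:R / N%:R) *: (x - p)); split.
- by rewrite mul0r scale0r addr0.
- by rewrite divff ?gt_eqF // scale1r addrC subrK.
- move=> k i; rewrite !mxE -natr1.
  have -> : p ord0 i + k%:R / N%:R * (x ord0 i - p ord0 i) -
      (p ord0 i + (k%:R + 1) / N%:R * (x ord0 i - p ord0 i)) =
      (p ord0 i - x ord0 i) / N%:R by field; rewrite gt_eqF.
  rewrite normrM normfV (ger0_norm (ltW N0)) ler_pdivrMr // mulrC.
  exact: le_trans (dist_coord_le p x i) dist_le.
- move=> k kN; apply: dist_segment.
  by rewrite divr_ge0 ?ler0n ?(ltW N0) //= ler_pdivrMr // mul1r ler_nat.
Qed.

End Euclidean.

Lemma floor_div_bounds (R : realType) (s v : R) : 0 < s ->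
  (Num.floor (v / s))%:~R * s <= v < ((Num.floor (v / s))%:~R + 1) * s.
Proof.
move=> s0; have /andP[lo hi] := floor_itv (v / s).
by rewrite intrD in hi; rewrite -ler_pdivlMr // -ltr_pdivrMr // lo hi.
Qed.

Lemma floor_div_le_succ (R : realType) (s v w : R) : 0 < s -> `|v - w| <= s ->
  (Num.floor (w / s) <= Num.floor (v / s) + 1)%R.
Proof.
move=> s0; rewrite ler_norml => /andP[wv _].
have /andP[v_lo v_hi] := floor_div_bounds v s0.
have /andP[w_lo w_hi] := floor_div_bounds w s0.
rewrite -ltzD1 -(ltr_int R) !intrD -(ltr_pM2r s0); nra.
Qed.

Lemma sqrt_le_nfrakS (R : realType) (n : nat) : Num.sqrt (n%:R : R) <= (nfrak R n)%:R + 1.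
Proof.
rewrite /nfrak natr_absz; have := ceil_ge (Num.sqrt (n%:R : R) - 1).
have := ler_norm (Num.ceil (Num.sqrt (n%:R : R) - 1)); rewrite -(ler_int R); lra.
Qed.

Section Grid.
Variables (R : realType) (n : nat) (eps : R).
Hypothesis side_gt0 : 0 < side n eps.
Local Notation s := (side n eps).
Implicit Types (j k : 'I_n -> int) (p q y z : 'rV[R]_n) (Y : set 'rV[R]_n).

Definition cube_of y : 'I_n -> int := fun i => Num.floor (y ord0 i / s).

Lemma cube_of_mem y : cube eps (cube_of y) y.
Proof. by move=> i; have /andP[lo hi] := floor_div_bounds (y ord0 i) side_gt0; rewrite lo ltW. Qed.

Lemma cube_extP m j y : cube_ext eps m j y <->
  forall i, (j i)%:~R * s - m%:R * s <= y ord0 i <= ((j i)%:~R + 1) * s + m%:R * s.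
Proof.
(* [lra] and [nra] do not see section hypotheses. *)
have s0 := side_gt0.
split=> [[z [jz yz]] i | y_near].
  have /andP[lo hi] := jz i; have := yz i; rewrite ler_norml => /andP[? ?].
  by apply/andP; split; lra.
have m0 : 0 <= m%:R * s by rewrite mulr_ge0 ?ler0n ?ltW.
pose c i := if y ord0 i < (j i)%:~R * s then (j i)%:~R * s
            else if ((j i)%:~R + 1) * s < y ord0 i then ((j i)%:~R + 1) * s
            else y ord0 i.
exists (\row_i c i); split=> i; rewrite mxE {}/c; have /andP[lo hi] := y_near i.
  by case: ltP => ?; [|case: ltP => ?]; apply/andP; split; lra.
by rewrite ler_norml; case: ltP => ?; [|case: ltP => ?]; apply/andP; split; lra.
Qed.

Lemma cube_sub_ext m j : cube eps j `<=` cube_ext eps m j.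
Proof.
move=> y jy; exists y; split=> // i.
by rewrite subrr normr0 mulr_ge0 ?ler0n ?ltW.
Qed.

Lemma sub_extension Y N : Y `<=` extension eps Y N.
Proof.
move=> y Yy; exists (cube_of y); split; last exact/cube_sub_ext/cube_of_mem.
by exists y; split=> //; apply: cube_of_mem.
Qed.

Definition neighbours j k := forall i, (k i <= j i + 1)%R /\ (j i <= k i + 1)%R.

Lemma neighbours_sub_ext1 j k : neighbours j k -> cube eps k `<=` cube_ext eps 1 j.
Proof.
move=> jk z kz; apply/cube_extP => i; have [kj jk'] := jk i.
have /andP[lo hi] := kz i.
move: kj jk'; rewrite -!(ler_int R) !intrD => kj jk'.
by apply/andP; split; nra.
Qed.

Lemma neighbours_meet j k : neighbours j k -> exists y, cube eps j y /\ cube eps k y.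
Proof.
have s0 := side_gt0.
move=> jk; exists (\row_i ((Order.max (j i) (k i))%:~R * s)).
split=> i; rewrite mxE; have [] := jk i;
  case: (leP (j i) (k i)); rewrite -!(ler_int R) -?(ltr_int R) !intrD => ? ? ?;
  by apply/andP; split; nra.
Qed.

Lemma cube_of_neighbours y z :
  (forall i, `|y ord0 i - z ord0 i| <= s) -> neighbours (cube_of y) (cube_of z).
Proof.
move=> yz i; split; first exact: floor_div_le_succ.
by apply: floor_div_le_succ => //; rewrite distrC.
Qed.

Lemma dist_cube_le j y z : cube eps j y -> cube eps j z -> dist y z <= Num.sqrt n%:R * s.
Proof.
move=> jy jz; apply: dist_le_coord_bound => [|i]; first exact: ltW.
have /andP[? ?] := jy i; have /andP[? ?] := jz i.
by rewrite ler_norml; apply/andP; split; lra.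
Qed.

Lemma extension_near_cube Y N j q p : cube eps j `<=` Y -> cube eps j q ->
  (forall i, `|p ord0 i - q ord0 i| <= N.+1%:R * s) -> extension eps Y N p.
Proof.
move=> jY jq pq.
pose k i := if p ord0 i < (j i)%:~R * s then (j i - 1)%R
            else if ((j i)%:~R + 1) * s < p ord0 i then (j i + 1)%R else j i.
have jk : neighbours j k.
  by move=> i; rewrite /k; case: ifP => _; [|case: ifP => _]; split; lia.
exists k; split.
  by have [y [jy ky]] := neighbours_meet jk; exists y; split=> //; apply: jY.
apply/cube_extP => i; have /andP[lo hi] := jq i.
have := pq i; rewrite ler_norml -natr1 => /andP[? ?].
have Ns : 0 <= N%:R * s by rewrite mulr_ge0 ?ler0n ?ltW.
by rewrite /k; case: ltP => ?; [|case: ltP => ?]; rewrite ?intrD ?intrB;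
  apply/andP; split; lra.
Qed.

Variables (X A : set 'rV[R]_n).

Lemma walk_hits_boundary_cube (y : nat -> 'rV[R]_n) N :
  A (y 0%N) -> X (y N) -> ~ A (y N) ->
  (forall m i, `|y m ord0 i - y m.+1 ord0 i| <= s) ->
  exists2 m, (m <= N)%N & boundary_cube eps X A (cube_of (y m)).
Proof.
move=> Ay0 XyN nAyN step; apply: contrapT => no_boundary.
have meets_interior m : (m <= N)%N -> Defs.meets eps A (cube_of (y m)) ->
    interior_cube eps X A (cube_of (y m)).
  by move=> mN Am; apply: contrapT => nim; apply: no_boundary; exists m.
have interior m : (m <= N)%N -> interior_cube eps X A (cube_of (y m)).
  elim: m => [|m IHm] mN; apply: meets_interior => //.
    by exists (y 0%N); split=> //; apply: cube_of_mem.
  have [_ [_ meetsA]] := IHm (ltnW mN); apply: meetsA.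
  exact/neighbours_sub_ext1/cube_of_neighbours/step.
have [_ [extA _]] := interior N (leqnn N); apply: nAyN; apply: extA; split=> //.
exact/cube_sub_ext/cube_of_mem.
Qed.

Lemma boundary_point_closer x p q r j :
  ~ extension eps (boundary eps X A) (nfrak R n + r) p ->
  boundary_cube eps X A j -> cube eps j q -> dist p x = dist p q + dist q x ->
  exists a, (boundary eps X A `&` A) a /\ dist a x + r%:R * s < dist p x.
Proof.
move=> p_far bj jq pqx; have [[a [ja Aa]] _] := bj.
exists a; split; first by split=> //; exists j.
have far : (nfrak R n + r).+1%:R * s < dist p q.
  rewrite ltNge; apply/negP => pq_near; apply: p_far.
  apply: (extension_near_cube (j := j) (q := q)) => // [z jz | i]; first by exists j.
  exact: le_trans (dist_coord_le p q i) pq_near.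
have aq := dist_cube_le ja jq.
have nfrak_ge : Num.sqrt n%:R * s <= ((nfrak R n)%:R + 1) * s.
  by rewrite ler_pM2r // sqrt_le_nfrakS.
have := dist_triangle a q x.
by move: far; rewrite -addn1 !natrD; lra.
Qed.

Lemma exists_boundary_point_closer x p r : X x -> ~ A x -> A p ->
  ~ extension eps (boundary eps X A) (nfrak R n + r) p ->
  exists a, (boundary eps X A `&` A) a /\ dist a x + r%:R * s < dist p x.
Proof.
move=> Xx nAx Ap p_far.
have [N [y [y0 yN step on_segment]]] := segment_walk p x side_gt0.
have [m mN bm] : exists2 m, (m <= N)%N & boundary_cube eps X A (cube_of (y m)).
  by apply: walk_hits_boundary_cube; rewrite ?y0 ?yN.
exact: boundary_point_closer p_far bm (cube_of_mem _) (on_segment m mN).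
Qed.

End Grid.

Theorem proposition4p2 (R : realType) (n : nat) (X A : set 'rV[R]_n) (eps : R) :
  (2 <= n)%N -> finite_set X -> 0 < eps -> A `<=` X ->
  (forall (x : 'rV[R]_n) (r : nat), X x -> ~ A x ->
     forall p : 'rV[R]_n,
       A p -> ~ (extension eps (boundary eps X A) (nfrak R n + r) `&` A) p ->
       exists a : 'rV[R]_n, (boundary eps X A `&` A) a /\
         dist a x + r%:R * side n eps < dist p x)
  /\
  (forall x p : 'rV[R]_n, X x -> ~ A x -> A p ->
     exists a : 'rV[R]_n, (extension eps (boundary eps X A) (nfrak R n) `&` A) a /\
       dist a x <= dist p x).
Proof.
move=> n2 _ eps0 _.
have s0 : 0 < side n eps by rewrite divr_gt0 // mulr_gt0 // sqrtr_gt0 ltr0n (leq_trans _ n2).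
split=> [x r Xx nAx p Ap p_far | x p Xx nAx Ap].
  by apply: exists_boundary_point_closer => // p_ext; apply: p_far.
have [p_near | p_far] := pselect ((extension eps (boundary eps X A) (nfrak R n) `&` A) p).
  by exists p.
have [|a [[ba Aa] closer]] := exists_boundary_point_closer s0 (r := 0) Xx nAx Ap.
  by rewrite addn0 => p_ext; apply: p_far.
exists a; split; first by split=> //; apply: sub_extension.
by move: closer; rewrite mul0r addr0 => /ltW.
Qed.
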